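(* Let $c\in\mathbb{R}\setminus\{0\}$. The group of direct isometries of the hyperboloid $(H,\mathrm{g}_c)$ satisfies $$\mathrm{Isom}_+(H,\mathrm{g}_c)=\ker(S_c)\cong\mathrm{PSL}(2,\mathbb{R}),$$ where $\mathrm{Isom}_+(H,\mathrm{g}_c)=\{\varphi\in\mathrm{Diff}_+(\mathbb{T}):(\varphi\times\varphi)^*\mathrm{g}_c=\mathrm{g}_c\}$ and $\ker(S_c)=\{\varphi\in\mathrm{Diff}_+(\mathbb{T}):S_c(\varphi)=0\}$.
   Context: $\mathbb{T}=\mathbb{R}/2\pi\mathbb{Z}$, $H=\mathbb{T}\times\mathbb{T}-\Delta$ with $\Delta$ the diagonal, $\mathrm{g}_c=\dfrac{4c\,d\theta_1d\theta_2}{|e^{i\theta_1}-e^{i\theta_2}|^2}$. $\mathrm{Diff}_+(\mathbb{T})$ acts on $H$ by $\varphi\mapsto\varphi\times\varphi$ (the orientation-preserving conformal diffeomorphisms). $S_c(\varphi)=\tfrac32\big((\varphi\times\varphi)^*\mathrm{g}_c-\mathrm{g}_c\big)|_\Delta$, where the tensor extends smoothly across $\Delta$ and $|_\Delta$ is pullback by $\theta\mapsto(\theta,\theta)$; equivalently $S_c(\varphi)=c\big(S(\varphi)+\tfrac12(\varphi'^2-1)d\theta^2\big)$ with $S(\varphi)=\big(\varphi'''/\varphi'-\tfrac32(\varphi''/\varphi')^2\big)d\theta^2$ computed on a lift of $\varphi$ to $\mathbb{R}$. *)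

From Stdlib Require Import Reals Lra.
From Coquelicot Require Import Coquelicot.
Open Scope R_scope.

Definition smooth (f : R -> R) : Prop :=
  forall (n : nat) (x : R), ex_derive (Derive_n f n) x.

(* A lift to R of an element of Diff_+(T), T = R/2piZ:
   smooth, commutes with the deck translation x |-> x + 2pi (degree 1),
   with everywhere positive derivative (orientation preserving diffeo). *)
Definition is_lift (f : R -> R) : Prop :=
  smooth f /\
  (forall x, f (x + 2 * PI) = f x + 2 * PI) /\
  (forall x, 0 < Derive f x).

(* Two lifts represent the same element of Diff_+(T). *)
Definition same_diffeo (f g : R -> R) : Prop :=
  exists k : Z, forall x, g x = f x + 2 * PI * IZR k.

(* |e^{ia} - e^{ib}|^2 *)
Definition chord2 (a b : R) : R :=
  (cos a - cos b) ^ 2 + (sin a - sin b) ^ 2.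

(* (t1,t2) represents a point of H = T x T - Diagonal *)
Definition offdiag (t1 t2 : R) : Prop :=
  forall k : Z, t1 - t2 <> 2 * PI * IZR k.

(* coefficient of g_c = 4c dθ1 dθ2 / |e^{iθ1}-e^{iθ2}|^2 *)
Definition gc (c t1 t2 : R) : R := 4 * c / chord2 t1 t2.

(* (phi x phi)^* g_c = g_c on H *)
Definition is_isom (c : R) (f : R -> R) : Prop :=
  forall t1 t2, offdiag t1 t2 ->
    gc c (f t1) (f t2) * Derive f t1 * Derive f t2 = gc c t1 t2.

(* coefficient of d theta^2 in S_c(phi) = c (S(phi) + 1/2 (phi'^2 - 1)) d theta^2 *)
Definition Sc (c : R) (f : R -> R) (x : R) : R :=
  c * (Derive_n f 3 x / Derive f x
       - 3 / 2 * (Derive_n f 2 x / Derive f x) ^ 2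
       + 1 / 2 * (Derive f x ^ 2 - 1)).

Definition in_ker_Sc (c : R) (f : R -> R) : Prop :=
  forall x, Sc c f x = 0.

Record mat2 := Mat2 { m11 : R; m12 : R; m21 : R; m22 : R }.

Definition mdet (A : mat2) : R := m11 A * m22 A - m12 A * m21 A.

Definition mmul (A B : mat2) : mat2 :=
  Mat2 (m11 A * m11 B + m12 A * m21 B) (m11 A * m12 B + m12 A * m22 B)
       (m21 A * m11 B + m22 A * m21 B) (m21 A * m12 B + m22 A * m22 B).

Definition mI : mat2 := Mat2 1 0 0 1.
Definition mnegI : mat2 := Mat2 (-1) 0 0 (-1).

(* An isometry f satisfies f'(s) f'(t) / sin^2((f s - f t)/2) = 1 / sin^2((s - t)/2).
   Hence for fixed b the cotangent gap t |-> cot((f t - f b)/2) - cot((t - b)/2) / f'(b)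
   is constant on (b, b + 2 pi).  Its derivative in b is affine in cot((t - b)/2), so
   comparing t = b + pi with t = b + pi/2 shows that the gap equals -f''/f'^2 and
   satisfies a Riccati equation, which after differentiation is S_c(f) = 0.

   Conversely, SL(2,R) acts on the directions of R^2, and the direction of
   u(x) = (cos(x/2), sin(x/2)) parametrizes T.  The lift of this action is
   F_A(x) = theta_A + int_0^x dt / |A u(t)|^2; the chord identity
   sin^2((y - x)/2) = |A u(x)|^2 |A u(y)|^2 sin^2((F_A y - F_A x)/2) makes it an
   isometry, and a direct computation gives S_c(F_A) = 0.  Two solutions of
   S_c = 0 with the same 2-jet at 0 differ by a constant, because
   ((f''/f' - g''/g')^2 + (f' - g')^2) / (f' g') is a first integral, and the F_A
   realise every 2-jet.  Thus ker S_c = { F_A }; A |-> F_A is multiplicative because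
   the actions compose, and F_A is a deck translation iff A fixes every direction,
   i.e. A = I or A = -I. *)

From Stdlib Require Import Reals Lra Lia FunctionalExtensionality.
From Coquelicot Require Import Coquelicot.
Open Scope R_scope.

Lemma is_derive_0_eq (g : R -> R) (a b : Rbar) :
  (forall x : R, Rbar_lt a x -> Rbar_lt x b -> is_derive g x 0) ->
  forall x y : R, Rbar_lt a x -> Rbar_lt x b -> Rbar_lt a y -> Rbar_lt y b -> g x = g y.
Proof.
  intros Hd.
  assert (Hlt : forall x y : R, Rbar_lt a x -> Rbar_lt y b -> x < y -> g x = g y).
  { intros x y Hx Hy Hxy.
    destruct (MVT_cor2 g (fun _ => 0) x y Hxy) as [z [Hz _]]; [|lra].
    intros z Hz. apply is_derive_Reals, Hd.
    - apply Rbar_lt_le_trans with x; [exact Hx | simpl; lra].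
    - apply Rbar_le_lt_trans with y; [simpl; lra | exact Hy]. }
  intros x y Hx Hx' Hy Hy'.
  destruct (Rtotal_order x y) as [H|[H|H]]; [auto | congruence | symmetry; auto].
Qed.

Lemma is_derive_0_const (g : R -> R) :
  (forall x, is_derive g x 0) -> forall x y, g x = g y.
Proof. intros Hd x y. apply (is_derive_0_eq g m_infty p_infty); simpl; auto. Qed.

Lemma is_derive_loc_unique (g h : R -> R) (x l l' : R) :
  locally x (fun t => g t = h t) -> is_derive g x l -> is_derive h x l' -> l = l'.
Proof.
  intros Hgh Hg Hh. apply (is_derive_ext_loc _ _ _ _ Hgh) in Hg.
  rewrite <- (is_derive_unique _ _ _ Hg). apply is_derive_unique, Hh.
Qed.

Lemma is_derive_neg_ratio_sq (p q : R -> R) (x dp dq : R) :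
  is_derive p x dp -> is_derive q x dq -> p x <> 0 ->
  is_derive (fun y => - (q y / p y ^ 2)) x (- (dq / p x ^ 2) + 2 * q x * dp / p x ^ 3).
Proof.
  intros Hp Hq Hpx.
  auto_derive; change (fun y => p y) with p; change (fun y => q y) with q.
  - repeat split; auto; eexists; eauto.
  - rewrite (is_derive_unique _ _ _ Hp), (is_derive_unique _ _ _ Hq). field. exact Hpx.
Qed.

Lemma pow2_eq0 (x : R) : x ^ 2 = 0 -> x = 0.
Proof. intros H. apply Rsqr_0_uniq. rewrite Rsqr_pow2. exact H. Qed.

Section Lift.

Variable f : R -> R.
Hypothesis hf : is_lift f.

Lemma lift_is_derive_n (n : nat) (x : R) :
  is_derive (Derive_n f n) x (Derive_n f (S n) x).
Proof. apply Derive_correct, (proj1 hf). Qed.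

Lemma lift_derive_pos (x : R) : 0 < Derive f x.
Proof. apply hf. Qed.

Lemma lift_increasing (x y : R) : x < y -> f x < f y.
Proof.
  intros Hxy. apply (incr_function f m_infty p_infty (Derive f)); simpl; auto.
  - intros t _ _. exact (lift_is_derive_n 0 t).
  - intros t _ _. apply lift_derive_pos.
Qed.

Lemma lift_shift_range (b t : R) : b < t < b + 2 * PI -> 0 < f t - f b < 2 * PI.
Proof.
  intros Ht. assert (Hb := lift_increasing b t (proj1 Ht)).
  assert (Ht' := lift_increasing t (b + 2 * PI) (proj2 Ht)).
  rewrite (proj1 (proj2 hf)) in Ht'. lra.
Qed.

End Lift.

(** * Isometries lie in the kernel of S_c *)

Lemma chord2_sin_half (a b : R) : chord2 a b = 4 * sin ((a - b) / 2) ^ 2.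
Proof.
  unfold chord2.
  assert (Hc : cos (a - b) = 1 - 2 * sin ((a - b) / 2) ^ 2).
  { replace (a - b) with (2 * ((a - b) / 2)) at 1 by field. rewrite cos_2a_sin. ring. }
  rewrite cos_minus in Hc.
  assert (Ha := sin2_cos2 a). assert (Hb := sin2_cos2 b). unfold Rsqr in *. nra.
Qed.

Lemma offdiag_of_lt (b t : R) : b < t < b + 2 * PI -> offdiag t b.
Proof.
  intros Ht k Hk. assert (Hp := PI_RGT_0).
  assert (H0 : 0 < IZR k) by (apply Rmult_lt_reg_l with (2 * PI); lra).
  assert (H1 : IZR k < 1) by (apply Rmult_lt_reg_l with (2 * PI); lra).
  apply lt_IZR in H0. apply lt_IZR in H1. lia.
Qed.

Definition cot (x : R) : R := cos x / sin x.

Lemma inv_sin2_cot (x : R) : sin x <> 0 -> / sin x ^ 2 = 1 + cot x ^ 2.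
Proof.
  intros Hs. assert (E := sin2_cos2 x). unfold cot, Rsqr in *.
  replace (/ sin x ^ 2) with ((sin x * sin x + cos x * cos x) / sin x ^ 2)
    by (rewrite E; field; exact Hs).
  field. exact Hs.
Qed.

Lemma is_derive_cot (x : R) : sin x <> 0 -> is_derive cot x (- (1 + cot x ^ 2)).
Proof.
  intros Hs. rewrite <- inv_sin2_cot by exact Hs. unfold cot.
  assert (E := sin2_cos2 x). unfold Rsqr in E.
  auto_derive; [exact Hs|].
  replace (- / sin x ^ 2) with (- (sin x * sin x + cos x * cos x) / sin x ^ 2)
    by (rewrite E; field; exact Hs).
  field. exact Hs.
Qed.

Lemma Derive_cot (x : R) : sin x <> 0 -> Derive cot x = - (1 + cot x ^ 2).
Proof. intros Hs. apply is_derive_unique, is_derive_cot, Hs. Qed.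

Lemma sin_half_pos (x : R) : 0 < x < 2 * PI -> 0 < sin (x / 2).
Proof. intros Hx. apply sin_gt_0; lra. Qed.

Lemma cot_PI2 : cot (PI / 2) = 0.
Proof. unfold cot. rewrite cos_PI2, sin_PI2. field. Qed.

Lemma cot_PI4 : cot (PI / 4) = 1.
Proof.
  unfold cot. rewrite cos_PI4, sin_PI4. field.
  apply Rgt_not_eq, sqrt_lt_R0. lra.
Qed.

Definition cot_gap (f : R -> R) (b t : R) : R :=
  cot ((f t - f b) / 2) - cot ((t - b) / 2) / Derive f b.

Section IsometryInKernel.

Variables (c : R) (f : R -> R).
Hypotheses (hc : c <> 0) (hf : is_lift f) (hi : is_isom c f).

Lemma isom_cot_identity (b t : R) : b < t < b + 2 * PI ->
  Derive f t * (1 + cot ((f t - f b) / 2) ^ 2) = (1 + cot ((t - b) / 2) ^ 2) / Derive f b.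
Proof.
  intros Ht.
  assert (HX := sin_half_pos (t - b) ltac:(lra)).
  assert (HY := sin_half_pos (f t - f b) (lift_shift_range f hf b t Ht)).
  assert (Hpb := lift_derive_pos f hf b).
  assert (Hiso := hi t b (offdiag_of_lt b t Ht)).
  unfold gc in Hiso. rewrite !chord2_sin_half in Hiso.
  rewrite <- !inv_sin2_cot by lra.
  replace (Derive f t * / sin ((f t - f b) / 2) ^ 2) with
    (4 * c / (4 * sin ((f t - f b) / 2) ^ 2) * Derive f t * Derive f b / (c * Derive f b))
    by (field; lra).
  rewrite Hiso. field. lra.
Qed.

Lemma cot_gap_dt (b t : R) : b < t < b + 2 * PI -> is_derive (cot_gap f b) t 0.
Proof.
  intros Ht.
  assert (HX := sin_half_pos (t - b) ltac:(lra)).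
  assert (HY := sin_half_pos (f t - f b) (lift_shift_range f hf b t Ht)).
  assert (Hpb := lift_derive_pos f hf b).
  assert (Hid := isom_cot_identity b t Ht).
  unfold cot_gap. auto_derive; change (fun x => cot x) with cot; change (fun x => f x) with f;
    unfold Rminus, Rdiv in *.
  - repeat split; try (eexists; apply is_derive_cot; lra).
    exists (Derive f t). exact (lift_is_derive_n f hf 0 t).
  - rewrite !Derive_cot by lra.
    transitivity (- (Derive f t * (1 + cot ((f t + - f b) * / 2) ^ 2)) / 2
                  + (1 + cot ((t + - b) * / 2) ^ 2) * / Derive f b / 2); [field; lra|].
    rewrite Hid. field. lra.
Qed.

Lemma cot_gap_const (b t t' : R) : b < t < b + 2 * PI -> b < t' < b + 2 * PI ->
  cot_gap f b t = cot_gap f b t'.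
Proof.
  intros Ht Ht'. apply (is_derive_0_eq (cot_gap f b) b (b + 2 * PI)); simpl; try lra.
  intros x Hx Hx'. apply cot_gap_dt. simpl in Hx, Hx'. lra.
Qed.

Lemma cot_gap_db (b t : R) : b < t < b + 2 * PI ->
  is_derive (fun b' => cot_gap f b' t) b
    (Derive f b / 2 * (1 + cot_gap f b t ^ 2) - 1 / (2 * Derive f b)
     + cot ((t - b) / 2) * (cot_gap f b t + Derive_n f 2 b / Derive f b ^ 2)).
Proof.
  intros Ht.
  assert (HX := sin_half_pos (t - b) ltac:(lra)).
  assert (HY := sin_half_pos (f t - f b) (lift_shift_range f hf b t Ht)).
  assert (Hpb := lift_derive_pos f hf b).
  unfold cot_gap. auto_derive; change (fun x => cot x) with cot; change (fun x => f x) with f;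
    change (fun x => Derive f x) with (Derive f); unfold Rminus, Rdiv in *.
  - repeat split; try (eexists; apply is_derive_cot; lra); try lra.
    + exists (Derive f b). exact (lift_is_derive_n f hf 0 b).
    + exists (Derive_n f 2 b). exact (lift_is_derive_n f hf 1 b).
  - rewrite !Derive_cot by lra. change (Derive (Derive f) b) with (Derive_n f 2 b).
    field. lra.
Qed.

Lemma cot_gap_antipode (b : R) : cot_gap f b (b + PI) = - (Derive_n f 2 b / Derive f b ^ 2).
Proof.
  assert (Hp := PI_RGT_0).
  assert (Hloc : locally b (fun b' => cot_gap f b' (b + PI) = cot_gap f b' (b + PI / 2))).
  { apply (locally_interval _ b (b - PI / 2) (b + PI / 2)); [simpl; lra .. |].
    intros y Hy Hy'. simpl in Hy, Hy'. apply cot_gap_const; lra. }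
  assert (E := is_derive_loc_unique _ _ _ _ _ Hloc
                 (cot_gap_db b (b + PI) ltac:(lra)) (cot_gap_db b (b + PI / 2) ltac:(lra))).
  rewrite (cot_gap_const b (b + PI / 2) (b + PI)) in E by lra.
  replace ((b + PI - b) / 2) with (PI / 2) in E by field.
  replace ((b + PI / 2 - b) / 2) with (PI / 4) in E by field.
  rewrite cot_PI2, cot_PI4 in E. lra.
Qed.

Lemma isom_Sc_zero (x : R) : Sc c f x = 0.
Proof.
  assert (Hp := PI_RGT_0).
  assert (Hpx := lift_derive_pos f hf x).
  assert (Hloc : locally x (fun b => cot_gap f b (x + PI) = - (Derive_n f 2 b / Derive f b ^ 2))).
  { apply (locally_interval _ x (x - PI / 2) (x + PI / 2)); [simpl; lra .. |].
    intros y Hy Hy'. simpl in Hy, Hy'. rewrite <- cot_gap_antipode. apply cot_gap_const; lra. }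
  assert (Hq := is_derive_neg_ratio_sq (Derive f) (Derive_n f 2) x _ _ (lift_is_derive_n f hf 1 x)
                 (lift_is_derive_n f hf 2 x) ltac:(lra)).
  assert (E := is_derive_loc_unique _ _ _ _ _ Hloc (cot_gap_db x (x + PI) ltac:(lra)) Hq).
  replace ((x + PI - x) / 2) with (PI / 2) in E by field.
  rewrite cot_PI2, cot_gap_antipode in E.
  unfold Sc. rewrite <- (Rmult_0_r c). f_equal.
  match type of E with ?L = ?M => transitivity (Derive f x * (L - M)) end.
  - field. lra.
  - rewrite E. ring.
Qed.

End IsometryInKernel.

(** * The action of SL(2,R) on the circle *)

Definition hvec (x : R) : R * R := (cos (x / 2), sin (x / 2)).

Definition mapp (A : mat2) (v : R * R) : R * R :=
  (m11 A * fst v + m12 A * snd v, m21 A * fst v + m22 A * snd v).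

Definition cross (v w : R * R) : R := fst v * snd w - snd v * fst w.

Definition norm2 (v : R * R) : R := fst v ^ 2 + snd v ^ 2.

Lemma norm2_hvec (x : R) : norm2 (hvec x) = 1.
Proof. assert (E := sin2_cos2 (x / 2)). unfold norm2, hvec, Rsqr in *; cbn [fst snd]. lra. Qed.

Lemma cross_hvec (x y : R) : cross (hvec x) (hvec y) = sin ((y - x) / 2).
Proof.
  unfold cross, hvec; cbn [fst snd]. replace ((y - x) / 2) with (y / 2 - x / 2) by field.
  rewrite sin_minus. ring.
Qed.

Lemma cross_antisym (v w : R * R) : cross w v = - cross v w.
Proof. unfold cross. ring. Qed.

Lemma cross_mapp (A : mat2) (v w : R * R) :
  cross (mapp A v) (mapp A w) = mdet A * cross v w.
Proof. unfold cross, mapp, mdet; cbn [fst snd]. ring. Qed.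

Lemma mapp_mmul (A B : mat2) (v : R * R) : mapp (mmul A B) v = mapp A (mapp B v).
Proof. unfold mapp, mmul; cbn [fst snd m11 m12 m21 m22]. f_equal; ring. Qed.

Lemma mdet_mmul (A B : mat2) : mdet (mmul A B) = mdet A * mdet B.
Proof. unfold mdet, mmul; cbn [m11 m12 m21 m22]. ring. Qed.

Lemma norm2_pos_of_cross (v w : R * R) : cross v w <> 0 -> 0 < norm2 v.
Proof.
  destruct v as [a b], w as [c d]. unfold cross, norm2; cbn [fst snd]. intros H.
  destruct (Req_dec a 0) as [-> | Ha]; [destruct (Req_dec b 0) as [-> | Hb]|].
  - exfalso. apply H. ring.
  - assert (0 < b ^ 2) by (apply pow2_gt_0; exact Hb). nra.
  - assert (0 < a ^ 2) by (apply pow2_gt_0; exact Ha). nra.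
Qed.

(* The identity |u|^2 (v x w) = (u.v)(u x w) - (u.w)(u x v). *)
Lemma cross_trans (u v w : R * R) :
  0 < norm2 u -> cross u v = 0 -> cross u w = 0 -> cross v w = 0.
Proof.
  intros Hu Hv Hw. apply Rmult_eq_reg_l with (norm2 u); [|lra].
  transitivity ((fst u * fst v + snd u * snd v) * cross u w
                - (fst u * fst w + snd u * snd w) * cross u v).
  - unfold cross, norm2. ring.
  - rewrite Hv, Hw. ring.
Qed.

Lemma parallel_unit (u w : R * R) : norm2 u = 1 -> cross u w = 0 ->
  exists l, fst w = l * fst u /\ snd w = l * snd u.
Proof.
  destruct u as [a b], w as [c d]. unfold norm2, cross; cbn [fst snd]. intros Hu Hc.
  exists (a * c + b * d). split.
  - replace c with (c * (a ^ 2 + b ^ 2)) at 1 by (rewrite Hu; ring).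
    transitivity ((a * c + b * d) * a - b * (a * d - b * c)); [ring | rewrite Hc; ring].
  - replace d with (d * (a ^ 2 + b ^ 2)) at 1 by (rewrite Hu; ring).
    transitivity ((a * c + b * d) * b + a * (a * d - b * c)); [ring | rewrite Hc; ring].
Qed.

Lemma cross_sq_parallel (u w u' w' : R * R) :
  norm2 u = 1 -> cross u w = 0 -> norm2 u' = 1 -> cross u' w' = 0 ->
  cross w w' ^ 2 = norm2 w * norm2 w' * cross u u' ^ 2.
Proof.
  intros Hu Hw Hu' Hw'.
  destruct (parallel_unit u w Hu Hw) as [l [E1 E2]].
  destruct (parallel_unit u' w' Hu' Hw') as [l' [E1' E2']].
  unfold cross, norm2 in *. rewrite E1, E2, E1', E2'.
  replace ((l * fst u) ^ 2 + (l * snd u) ^ 2) with (l ^ 2 * (fst u ^ 2 + snd u ^ 2)) by ring.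
  replace ((l' * fst u') ^ 2 + (l' * snd u') ^ 2) with (l' ^ 2 * (fst u' ^ 2 + snd u' ^ 2)) by ring.
  rewrite Hu, Hu'. ring.
Qed.

Definition alA (A : mat2) : R := (m11 A ^ 2 + m21 A ^ 2 + m12 A ^ 2 + m22 A ^ 2) / 2.
Definition beA (A : mat2) : R := (m11 A ^ 2 + m21 A ^ 2 - m12 A ^ 2 - m22 A ^ 2) / 2.
Definition gaA (A : mat2) : R := m11 A * m12 A + m21 A * m22 A.

Definition nA (A : mat2) (x : R) : R := alA A + beA A * cos x + gaA A * sin x.
Definition dnA (A : mat2) (x : R) : R := - beA A * sin x + gaA A * cos x.

Lemma nA_norm2 (A : mat2) (x : R) : nA A x = norm2 (mapp A (hvec x)).
Proof.
  assert (E := norm2_hvec x). unfold nA, alA, beA, gaA, norm2, mapp, hvec in *; cbn [fst snd] in *.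
  replace x with (2 * (x / 2)) at 1 2 by field. rewrite cos_2a, sin_2a.
  transitivity ((m11 A ^ 2 + m21 A ^ 2 + m12 A ^ 2 + m22 A ^ 2) / 2
                  * (cos (x / 2) ^ 2 + sin (x / 2) ^ 2)
    + (m11 A ^ 2 + m21 A ^ 2 - m12 A ^ 2 - m22 A ^ 2) / 2
      * (cos (x / 2) * cos (x / 2) - sin (x / 2) * sin (x / 2))
    + (m11 A * m12 A + m21 A * m22 A) * (2 * sin (x / 2) * cos (x / 2))); [rewrite E; ring | field].
Qed.

Lemma nA_pos (A : mat2) (x : R) : mdet A = 1 -> 0 < nA A x.
Proof.
  intros HA. rewrite nA_norm2. apply norm2_pos_of_cross with (mapp A (hvec (x + PI))).
  rewrite cross_mapp, HA, cross_hvec. replace ((x + PI - x) / 2) with (PI / 2) by field.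
  rewrite sin_PI2. lra.
Qed.

Lemma dnA_nA_sq (A : mat2) (x : R) : mdet A = 1 ->
  dnA A x ^ 2 + (nA A x - alA A) ^ 2 = alA A ^ 2 - 1.
Proof.
  intros HA. assert (E := sin2_cos2 x). unfold Rsqr in E.
  transitivity ((beA A ^ 2 + gaA A ^ 2) * (sin x * sin x + cos x * cos x));
    [unfold dnA, nA; ring | rewrite E].
  replace 1 with (mdet A ^ 2) at 2 by (rewrite HA; ring).
  unfold alA, beA, gaA, mdet. field.
Qed.

Lemma is_derive_nA (A : mat2) (x : R) : is_derive (nA A) x (dnA A x).
Proof. unfold nA, dnA. auto_derive; [exact I | ring]. Qed.

Lemma is_derive_dnA (A : mat2) (x : R) : is_derive (dnA A) x (alA A - nA A x).
Proof. unfold nA, dnA. auto_derive; [exact I | ring]. Qed.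

Lemma Derive_n_S_of_is_derive (g h : R -> R) :
  (forall x, is_derive g x (h x)) -> forall n x, Derive_n g (S n) x = Derive_n h n x.
Proof.
  intros Hd n x. replace (S n) with (n + 1)%nat by lia.
  rewrite <- Derive_n_comp. apply Derive_n_ext. intros t. apply is_derive_unique, Hd.
Qed.

Lemma smooth_of_is_derive (g h : R -> R) :
  (forall x, is_derive g x (h x)) -> smooth h -> smooth g.
Proof.
  intros Hd Hh [|n] x.
  - exists (h x). apply Hd.
  - apply (ex_derive_ext (Derive_n h n)); [|apply Hh].
    intros t. symmetry. apply Derive_n_S_of_is_derive, Hd.
Qed.

Lemma smooth_of_derive_closed (P : (R -> R) -> Prop) :
  (forall g, P g -> exists h, P h /\ forall x, is_derive g x (h x)) ->
  forall g, P g -> smooth g.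
Proof.
  intros HP g Hg n. revert g Hg. induction n as [|n IH]; intros g Hg x;
    destruct (HP g Hg) as [h [Hh Hd]].
  - exists (h x). apply Hd.
  - apply (ex_derive_ext (Derive_n h n)); [|apply IH, Hh].
    intros t. symmetry. apply Derive_n_S_of_is_derive, Hd.
Qed.

Inductive trig_frac (A : mat2) : (R -> R) -> Prop :=
  | tf_const (r : R) : trig_frac A (fun _ => r)
  | tf_cos : trig_frac A cos
  | tf_sin : trig_frac A sin
  | tf_inv_nA : trig_frac A (fun x => / nA A x)
  | tf_plus (g h : R -> R) : trig_frac A g -> trig_frac A h -> trig_frac A (fun x => g x + h x)
  | tf_mult (g h : R -> R) : trig_frac A g -> trig_frac A h -> trig_frac A (fun x => g x * h x).

Lemma is_derive_inv_nA (A : mat2) (x : R) : mdet A = 1 ->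
  is_derive (fun y => / nA A y) x (- (dnA A x / nA A x ^ 2)).
Proof.
  intros HA. assert (Hn := nA_pos A x HA).
  auto_derive; change (fun y => nA A y) with (nA A).
  - split; [exists (dnA A x); apply is_derive_nA | split; [lra | exact I]].
  - rewrite (is_derive_unique _ _ _ (is_derive_nA A x)). field. lra.
Qed.

Lemma trig_frac_derive_closed (A : mat2) : mdet A = 1 ->
  forall g, trig_frac A g -> exists h, trig_frac A h /\ forall x, is_derive g x (h x).
Proof.
  intros HA g Hg. induction Hg as [r| | | |g h _ [g' [Hg' Dg]] _ [h' [Hh' Dh]]
                                         |g h Hg [g' [Hg' Dg]] Hh [h' [Hh' Dh]]].
  - exists (fun _ => 0). split; [apply tf_const|]. intros x. auto_derive; [exact I | ring].
  - exists (fun x => -1 * sin x). split; [apply tf_mult; constructor|].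
    intros x. auto_derive; [exact I | ring].
  - exists cos. split; [constructor|]. intros x. auto_derive; [exact I | ring].
  - exists (fun x => (-1 * (- beA A * sin x + gaA A * cos x)) * (/ nA A x * / nA A x)).
    split.
    + repeat apply tf_mult; repeat apply tf_plus; repeat apply tf_mult; constructor.
    + intros x. assert (Hn := nA_pos A x HA).
      replace (-1 * (- beA A * sin x + gaA A * cos x) * (/ nA A x * / nA A x))
        with (- (dnA A x / nA A x ^ 2)) by (unfold dnA; field; lra).
      apply is_derive_inv_nA, HA.
  - exists (fun x => g' x + h' x). split; [apply tf_plus; assumption|].
    intros x. apply (is_derive_plus g h); auto.
  - exists (fun x => g' x * h x + g x * h' x). split.
    + apply tf_plus; apply tf_mult; assumption.
    + intros x. apply (is_derive_mult g h); auto. intros t u. apply Rmult_comm.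
Qed.

Lemma smooth_inv_nA (A : mat2) : mdet A = 1 -> smooth (fun x => / nA A x).
Proof.
  intros HA. apply (smooth_of_derive_closed (trig_frac A)).
  - apply trig_frac_derive_closed, HA.
  - apply tf_inv_nA.
Qed.

Lemma sin_half_eq0_const (g : R -> R) :
  (forall x, continuous g x) -> (forall x, sin (g x / 2) = 0) ->
  exists k : Z, forall x, g x = 2 * PI * IZR k.
Proof.
  intros Hc Hs. assert (Hp := PI_RGT_0).
  assert (Hz : forall x, exists k : Z, g x = 2 * PI * IZR k).
  { intros x. destruct (sin_eq_0_0 _ (Hs x)) as [k Hk]. exists k. lra. }
  assert (Hodd : forall (j : Z) x, g x <> 2 * PI * IZR j + PI).
  { intros j x Hx. destruct (Hz x) as [m Hm].
    assert (E : IZR (2 * m) = IZR (2 * j + 1)).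
    { rewrite plus_IZR, !mult_IZR. apply Rmult_eq_reg_l with PI; [simpl; lra | lra]. }
    apply eq_IZR in E. lia. }
  destruct (Hz 0) as [k Hk]. exists k. intros y. destruct (Hz y) as [m Hm].
  destruct (Z.lt_total m k) as [Hlt|[->|Hgt]]; [exfalso | exact Hm | exfalso].
  - assert (Hr : IZR m + 1 <= IZR k) by (rewrite <- plus_IZR; apply IZR_le; lia).
    destruct (IVT_gen_consistent g 0 y (2 * PI * IZR (k - 1) + PI) Hc) as [z [_ Hgz]].
    + rewrite minus_IZR. split.
      * apply Rle_trans with (g y); [apply Rmin_r | rewrite Hm; nra].
      * apply Rle_trans with (g 0); [rewrite Hk; lra | apply Rmax_l].
    + exact (Hodd _ z Hgz).
  - assert (Hr : IZR k + 1 <= IZR m) by (rewrite <- plus_IZR; apply IZR_le; lia).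
    destruct (IVT_gen_consistent g 0 y (2 * PI * IZR k + PI) Hc) as [z [_ Hgz]].
    + split.
      * apply Rle_trans with (g 0); [apply Rmin_l | rewrite Hk; lra].
      * apply Rle_trans with (g y); [rewrite Hm; nra | apply Rmax_r].
    + exact (Hodd _ z Hgz).
Qed.

Definition thetaA (A : mat2) : R :=
  if Req_EM_T (m11 A) 0 then PI else 2 * atan (m21 A / m11 A).

Definition FA (A : mat2) (x : R) : R := thetaA A + RInt (fun t => / nA A t) 0 x.

Lemma cross_hvec_thetaA (A : mat2) : cross (hvec (thetaA A)) (mapp A (hvec 0)) = 0.
Proof.
  unfold cross, hvec, mapp, thetaA; cbn [fst snd].
  replace (0 / 2) with 0 by field. rewrite cos_0, sin_0.
  destruct (Req_EM_T (m11 A) 0) as [H|H].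
  - rewrite H, cos_PI2, sin_PI2. ring.
  - replace (2 * atan (m21 A / m11 A) / 2) with (atan (m21 A / m11 A)) by field.
    set (t := atan (m21 A / m11 A)).
    assert (Ht : sin t / cos t = m21 A / m11 A) by apply tan_atan.
    assert (Hc : 0 < cos t).
    { unfold t. rewrite cos_atan. apply Rdiv_lt_0_compat; [lra|]. apply sqrt_lt_R0.
      assert (0 <= (m21 A / m11 A)²) by apply Rle_0_sqr. lra. }
    replace (sin t) with (m21 A / m11 A * cos t) by (rewrite <- Ht; field; lra).
    field. exact H.
Qed.

Lemma cross_hvec_mapp_invariant (A : mat2) (g : R -> R) : mdet A = 1 ->
  (forall x, is_derive g x (/ nA A x)) ->
  cross (hvec (g 0)) (mapp A (hvec 0)) = 0 ->
  forall x, cross (hvec (g x)) (mapp A (hvec x)) = 0.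
Proof.
  intros HA Hg H0.
  set (ratio := fun y => cross (hvec (g y)) (mapp A (hvec y)) ^ 2 / norm2 (mapp A (hvec y))).
  assert (Hd : forall x, is_derive ratio x 0).
  { intros x. assert (Hn := nA_pos A x HA). assert (Hgx := Hg x).
    rewrite nA_norm2 in Hn, Hgx. assert (Hcs := norm2_hvec x).
    unfold ratio, cross, norm2, mapp, hvec in *; cbn [fst snd] in *.
    destruct A as [a b c d]; unfold mdet in HA; cbn [m11 m12 m21 m22] in *.
    auto_derive; change (fun y => g y) with g.
    - repeat split; try (eexists; exact Hgx). unfold Rdiv in Hn. nra.
    - rewrite (is_derive_unique _ _ _ Hgx). unfold Rdiv in *.
      set (c' := cos (x * / 2)) in *. set (s' := sin (x * / 2)) in *.
      set (U1 := cos (g x * / 2)). set (U2 := sin (g x * / 2)).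
      (* W is the cross product of A u(x) with its derivative, i.e. det A / 2; the
         derivative of the ratio is a multiple of 2 W - 1. *)
      set (W := (a * c' + b * s') * (c * (- s' / 2) + d * (c' / 2))
                - (c * c' + d * s') * (a * (- s' / 2) + b * (c' / 2))).
      assert (HW : 2 * W - 1 = 0).
      { transitivity ((a * d - b * c) * (c' ^ 2 + s' ^ 2) - 1); [unfold W; field|].
        rewrite HA, Hcs. ring. }
      transitivity ((U1 * (c * c' + d * s') - U2 * (a * c' + b * s')) * (2 * W - 1)
                    * (U1 * (a * c' + b * s') + U2 * (c * c' + d * s'))
                    / ((a * c' + b * s') ^ 2 + (c * c' + d * s') ^ 2) ^ 2).
      + unfold W. field. lra.
      + rewrite HW. field. lra. }
  intros x. assert (E := is_derive_0_const ratio Hd x 0).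
  assert (Hn := nA_pos A x HA). rewrite nA_norm2 in Hn.
  unfold ratio in E. rewrite H0 in E.
  apply pow2_eq0.
  replace (cross (hvec (g x)) (mapp A (hvec x)) ^ 2)
    with (cross (hvec (g x)) (mapp A (hvec x)) ^ 2 / norm2 (mapp A (hvec x))
          * norm2 (mapp A (hvec x)))
    by (field; lra).
  rewrite E. unfold Rdiv. ring.
Qed.

Section FA.

Variable A : mat2.
Hypothesis hA : mdet A = 1.

Lemma FA_is_derive (x : R) : is_derive (FA A) x (/ nA A x).
Proof.
  assert (Hc : forall y, continuous (fun t => / nA A t) y).
  { intros y. apply (ex_derive_continuous (V := R_NormedModule)).
    eexists. apply is_derive_inv_nA, hA. }
  assert (Hint : is_derive (fun y => RInt (fun t => / nA A t) 0 y) x (/ nA A x)).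
  { apply (is_derive_RInt (fun t => / nA A t) _ 0 x); [|apply Hc].
    exists (mkposreal 1 Rlt_0_1). intros y _. apply (RInt_correct (V := R_CompleteNormedModule)).
    apply (ex_RInt_continuous (V := R_CompleteNormedModule)). intros z _. apply Hc. }
  unfold FA. replace (/ nA A x) with (0 + / nA A x) by ring.
  apply (is_derive_plus (fun _ => thetaA A)); [auto_derive; auto | exact Hint].
Qed.

Lemma FA_0 : FA A 0 = thetaA A.
Proof. unfold FA. rewrite RInt_point. unfold zero; simpl. ring. Qed.

Lemma Derive_FA : Derive (FA A) = fun x => / nA A x.
Proof. apply functional_extensionality. intros x. apply is_derive_unique, FA_is_derive. Qed.

Lemma Derive_n_FA_2 (x : R) : Derive_n (FA A) 2 x = - (dnA A x / nA A x ^ 2).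
Proof.
  change (Derive_n (FA A) 2 x) with (Derive (Derive (FA A)) x). rewrite Derive_FA.
  apply is_derive_unique, is_derive_inv_nA, hA.
Qed.

Lemma Derive_n_FA_3 (x : R) : Derive_n (FA A) 3 x =
  - ((alA A - nA A x) / nA A x ^ 2) + 2 * dnA A x * dnA A x / nA A x ^ 3.
Proof.
  assert (E : Derive_n (FA A) 2 = fun x => - (dnA A x / nA A x ^ 2)).
  { apply functional_extensionality, Derive_n_FA_2. }
  change (Derive_n (FA A) 3 x) with (Derive (Derive_n (FA A) 2) x). rewrite E.
  apply is_derive_unique, is_derive_neg_ratio_sq; [apply is_derive_nA | apply is_derive_dnA |].
  apply Rgt_not_eq, nA_pos, hA.
Qed.

Lemma FA_smooth : smooth (FA A).
Proof. apply (smooth_of_is_derive _ _ FA_is_derive), smooth_inv_nA, hA. Qed.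

Lemma FA_Sc_zero (c x : R) : Sc c (FA A) x = 0.
Proof.
  unfold Sc. rewrite Derive_n_FA_3, Derive_n_FA_2, Derive_FA.
  assert (Hn := nA_pos A x hA). assert (E := dnA_nA_sq A x hA).
  rewrite <- (Rmult_0_r c). f_equal.
  transitivity ((dnA A x ^ 2 + (nA A x - alA A) ^ 2 - (alA A ^ 2 - 1)) / (2 * nA A x ^ 2));
    [field; lra | rewrite E; field; lra].
Qed.

Lemma FA_increasing (x y : R) : x < y -> FA A x < FA A y.
Proof.
  intros Hxy. apply (incr_function (FA A) m_infty p_infty (fun t => / nA A t)); simpl; auto.
  - intros t _ _. apply FA_is_derive.
  - intros t _ _. apply Rinv_0_lt_compat, nA_pos, hA.
Qed.

Lemma FA_continuous (x : R) : continuous (FA A) x.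
Proof. apply (ex_derive_continuous (V := R_NormedModule)). eexists. apply FA_is_derive. Qed.

Lemma cross_hvec_FA (x : R) : cross (hvec (FA A x)) (mapp A (hvec x)) = 0.
Proof.
  apply cross_hvec_mapp_invariant; [exact hA | exact FA_is_derive |].
  rewrite FA_0. apply cross_hvec_thetaA.
Qed.

Lemma FA_chord (x y : R) :
  sin ((y - x) / 2) ^ 2 = nA A x * nA A y * sin ((FA A y - FA A x) / 2) ^ 2.
Proof.
  rewrite <- (Rmult_1_l (sin ((y - x) / 2))), <- hA, <- cross_hvec, <- cross_mapp, <- cross_hvec.
  rewrite !nA_norm2. apply cross_sq_parallel; auto using norm2_hvec, cross_hvec_FA.
Qed.

Lemma sin_half_FA_eq0 (x y : R) :
  sin ((y - x) / 2) = 0 <-> sin ((FA A y - FA A x) / 2) = 0.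
Proof.
  assert (E := FA_chord x y).
  assert (Hn := Rmult_lt_0_compat _ _ (nA_pos A x hA) (nA_pos A y hA)).
  split; intros H; apply pow2_eq0; rewrite H in E.
  - apply Rmult_eq_reg_l with (nA A x * nA A y); [|lra]. rewrite <- E. ring.
  - rewrite E. ring.
Qed.

Lemma FA_periodic (x : R) : FA A (x + 2 * PI) = FA A x + 2 * PI.
Proof.
  assert (Hp := PI_RGT_0).
  destruct (sin_half_eq0_const (fun x => FA A (x + 2 * PI) - FA A x)) as [k Hk].
  - intros y. apply (ex_derive_continuous (V := R_NormedModule)).
    auto_derive. repeat split; eexists; apply FA_is_derive.
  - intros y. apply (sin_half_FA_eq0 y (y + 2 * PI)).
    replace ((y + 2 * PI - y) / 2) with PI by field. apply sin_PI.
  - assert (H0 := Hk 0). simpl in H0. rewrite Rplus_0_l in H0.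
    assert (Hk1 : k = 1%Z).
    { assert (Hpos : (0 < k)%Z).
      { apply lt_IZR. apply Rmult_lt_reg_l with (2 * PI); [lra|].
        assert (Hi := FA_increasing 0 (2 * PI) ltac:(lra)). lra. }
      destruct (Z.eq_dec k 1) as [|Hne]; [assumption | exfalso].
      assert (Hk2 : 2 <= IZR k) by (apply IZR_le; lia).
      destruct (IVT_gen_consistent (FA A) 0 (2 * PI) (FA A 0 + 2 * PI) FA_continuous)
        as [y [Hy Hy']].
      { split.
        - apply Rle_trans with (FA A 0); [apply Rmin_l | lra].
        - apply Rle_trans with (FA A (2 * PI)); [nra | apply Rmax_r]. }
      rewrite Rmin_left, Rmax_right in Hy by lra.
      assert (Hs : sin ((y - 0) / 2) = 0).
      { apply (sin_half_FA_eq0 0 y). rewrite Hy'.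
        replace ((FA A 0 + 2 * PI - FA A 0) / 2) with PI by field. apply sin_PI. }
      destruct (Req_dec y 0) as [->|Y0]; [lra|].
      destruct (Req_dec y (2 * PI)) as [->|Y1]; [nra|].
      assert (0 < sin ((y - 0) / 2)) by (apply sin_half_pos; lra). lra. }
    specialize (Hk x). subst k. simpl in Hk. lra.
Qed.

Lemma FA_lift : is_lift (FA A).
Proof.
  split; [exact FA_smooth | split; [exact FA_periodic|]].
  intros x. rewrite Derive_FA. apply Rinv_0_lt_compat, nA_pos, hA.
Qed.

Lemma FA_isom (c : R) : is_isom c (FA A).
Proof.
  intros t1 t2 Ho.
  assert (Hs : sin ((t1 - t2) / 2) <> 0).
  { intros Hs. destruct (sin_eq_0_0 _ Hs) as [k Hk]. apply (Ho k). lra. }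
  assert (Hs' : sin ((FA A t1 - FA A t2) / 2) <> 0) by (rewrite <- sin_half_FA_eq0; exact Hs).
  assert (E := FA_chord t2 t1).
  assert (N1 := nA_pos A t1 hA). assert (N2 := nA_pos A t2 hA).
  rewrite Derive_FA. unfold gc. rewrite !chord2_sin_half, E.
  field. repeat split; lra.
Qed.

End FA.

Lemma FA_mmul (A B : mat2) : mdet A = 1 -> mdet B = 1 ->
  same_diffeo (FA (mmul A B)) (fun x => FA A (FA B x)).
Proof.
  intros HA HB.
  assert (HAB : mdet (mmul A B) = 1) by (rewrite mdet_mmul, HA, HB; ring).
  destruct (sin_half_eq0_const (fun x => FA A (FA B x) - FA (mmul A B) x)) as [k Hk].
  - intros x. apply (ex_derive_continuous (V := R_NormedModule)).
    auto_derive. repeat split; eexists; apply FA_is_derive; assumption.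
  - intros x. rewrite <- cross_hvec.
    set (w := mapp (mmul A B) (hvec x)). set (v := mapp A (hvec (FA B x))).
    assert (Hw : 0 < norm2 w) by (unfold w; rewrite <- nA_norm2; apply nA_pos, HAB).
    assert (Hv : 0 < norm2 v) by (unfold v; rewrite <- nA_norm2; apply nA_pos, HA).
    assert (Hwv : cross w v = 0).
    { unfold w, v. rewrite mapp_mmul, cross_mapp, cross_antisym, (cross_hvec_FA B HB). ring. }
    assert (Hw' : cross w (hvec (FA (mmul A B) x)) = 0).
    { rewrite cross_antisym, (cross_hvec_FA _ HAB). ring. }
    assert (Hv' : cross v (hvec (FA (mmul A B) x)) = 0).
    { rewrite cross_antisym, (cross_trans w); auto. ring. }
    apply (cross_trans v); auto.
    rewrite cross_antisym, (cross_hvec_FA A HA). ring.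
  - exists k. intros x. specialize (Hk x). cbv beta in Hk. lra.
Qed.

Lemma FA_trivial_iff (A : mat2) : mdet A = 1 ->
  (same_diffeo (FA A) (fun x => x) <-> A = mI \/ A = mnegI).
Proof.
  intros HA. split.
  - intros [k Hk].
    assert (Hfix : forall x, cross (hvec x) (mapp A (hvec x)) = 0).
    { intros x. apply (cross_trans (hvec (FA A x))).
      - rewrite norm2_hvec. lra.
      - rewrite cross_hvec. apply sin_eq_0_1. exists k.
        specialize (Hk x). cbv beta in Hk. lra.
      - apply cross_hvec_FA, HA. }
    assert (Hp := PI_RGT_0). assert (Hs2 := sqrt_lt_R0 2 ltac:(lra)).
    assert (C0 := Hfix 0). assert (C1 := Hfix PI). assert (C2 := Hfix (PI / 2)).
    unfold cross, mapp, hvec in C0, C1, C2; cbn [fst snd] in C0, C1, C2.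
    replace (0 / 2) with 0 in C0 by field. replace (PI / 2 / 2) with (PI / 4) in C2 by field.
    rewrite cos_0, sin_0 in C0. rewrite cos_PI2, sin_PI2 in C1. rewrite cos_PI4, sin_PI4 in C2.
    destruct A as [a b c d]; unfold mdet in HA; cbn [m11 m12 m21 m22] in *.
    assert (Hc : c = 0) by lra. assert (Hb : b = 0) by lra.
    assert (Hd : d = a).
    { assert (Hq : 1 / sqrt 2 * (1 / sqrt 2) = / 2).
      { replace (1 / sqrt 2 * (1 / sqrt 2)) with (/ (sqrt 2 * sqrt 2)) by (field; lra).
        rewrite sqrt_sqrt by lra. reflexivity. }
      replace (1 / sqrt 2 * (c * (1 / sqrt 2) + d * (1 / sqrt 2))
               - 1 / sqrt 2 * (a * (1 / sqrt 2) + b * (1 / sqrt 2)))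
        with (1 / sqrt 2 * (1 / sqrt 2) * (c + d - a - b)) in C2 by ring.
      rewrite Hq in C2. lra. }
    subst b c d. assert (Ha : (a - 1) * (a + 1) = 0) by lra.
    destruct (Rmult_integral _ _ Ha); [left | right]; unfold mI, mnegI; f_equal; lra.
  - intros H.
    assert (Hs : forall x, sin ((x - FA A x) / 2) = 0).
    { intros x. rewrite <- cross_hvec. assert (H1 := cross_hvec_FA A HA x).
      destruct H as [-> | ->]; unfold cross, mapp, mI, mnegI in *;
        cbn [fst snd m11 m12 m21 m22] in *;
        lra. }
    destruct (sin_half_eq0_const (fun x => x - FA A x)) as [k Hk]; [|exact Hs|].
    + intros x. apply (ex_derive_continuous (V := R_NormedModule)).
      auto_derive. repeat split; eexists; apply FA_is_derive, HA.
    + exists k. intros x. specialize (Hk x). cbv beta in Hk. lra.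
Qed.

Lemma FA_initial_data (p0 p1 y0 : R) : 0 < p0 ->
  exists A, mdet A = 1 /\ (exists k : Z, FA A 0 = y0 + 2 * PI * IZR k) /\
    Derive (FA A) 0 = p0 /\ Derive_n (FA A) 2 0 = p1.
Proof.
  intros Hp0.
  assert (Hsq : 0 < sqrt p0) by (apply sqrt_lt_R0; exact Hp0).
  assert (Hsq2 : sqrt p0 * sqrt p0 = p0) by (apply sqrt_sqrt; lra).
  set (s := / sqrt p0). set (t := - p1 * s ^ 3).
  assert (Hs : 0 < s) by (apply Rinv_0_lt_compat, Hsq).
  assert (Hs2 : s ^ 2 = / p0).
  { replace (/ p0) with (/ (sqrt p0 * sqrt p0)) by (rewrite Hsq2; reflexivity).
    unfold s. field. lra. }
  assert (Hcs := norm2_hvec y0). unfold norm2, hvec in Hcs; cbn [fst snd] in Hcs.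
  set (co := cos (y0 / 2)) in *. set (si := sin (y0 / 2)) in *.
  set (A := Mat2 (co * s) (co * t - si / s) (si * s) (si * t + co / s)).
  assert (HA : mdet A = 1) by (unfold mdet, A; cbn [m11 m12 m21 m22]; rewrite <- Hcs; field; lra).
  assert (Hn : nA A 0 = s ^ 2).
  { unfold nA, alA, beA, gaA, A; cbn [m11 m12 m21 m22]. rewrite cos_0, sin_0.
    transitivity (s ^ 2 * (co ^ 2 + si ^ 2)); [field; lra | rewrite Hcs; ring]. }
  assert (Hdn : dnA A 0 = s * t).
  { unfold dnA, gaA, A; cbn [m11 m12 m21 m22]. rewrite cos_0, sin_0.
    transitivity (s * t * (co ^ 2 + si ^ 2)); [field; lra | rewrite Hcs; ring]. }
  exists A. split; [exact HA|]. split; [|split].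
  - assert (Hc := cross_hvec_FA A HA 0).
    replace (mapp A (hvec 0)) with (s * co, s * si) in Hc
      by (unfold mapp, hvec, A; cbn [fst snd m11 m12 m21 m22];
          replace (0 / 2) with 0 by field; rewrite cos_0, sin_0; f_equal; ring).
    assert (Hsin : sin ((y0 - FA A 0) / 2) = 0).
    { apply Rmult_eq_reg_l with s; [|lra]. rewrite <- cross_hvec.
      unfold cross, hvec in *; cbn [fst snd] in *. fold co si. lra. }
    destruct (sin_eq_0_0 _ Hsin) as [k Hk]. exists (- k)%Z. rewrite opp_IZR. lra.
  - rewrite (Derive_FA A HA), Hn, Hs2. field. lra.
  - rewrite (Derive_n_FA_2 A HA), Hn, Hdn. unfold t.
    field. lra.
Qed.

(** * The kernel of S_c *)

Lemma ker_Sc_ode (c : R) (f : R -> R) (x : R) : c <> 0 -> is_lift f -> Sc c f x = 0 ->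
  Derive_n f 3 x =
  Derive f x * (3 / 2 * (Derive_n f 2 x / Derive f x) ^ 2 - (Derive f x ^ 2 - 1) / 2).
Proof.
  intros hc hf H. unfold Sc in H. assert (Hp := lift_derive_pos f hf x).
  apply Rmult_integral in H. destruct H as [H|H]; [contradiction|].
  replace (Derive_n f 3 x) with (Derive f x * (Derive_n f 3 x / Derive f x)) by (field; lra).
  f_equal. lra.
Qed.

Lemma schwarz_ode_energy_derive (p q P Q : R -> R) (x : R) :
  0 < p x -> 0 < P x ->
  is_derive p x (q x) ->
  is_derive q x (p x * (3 / 2 * (q x / p x) ^ 2 - (p x ^ 2 - 1) / 2)) ->
  is_derive P x (Q x) ->
  is_derive Q x (P x * (3 / 2 * (Q x / P x) ^ 2 - (P x ^ 2 - 1) / 2)) ->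
  is_derive (fun y => ((q y / p y - Q y / P y) ^ 2 + (p y - P y) ^ 2) / (p y * P y)) x 0.
Proof.
  intros Hp HP Dp Dq DP DQ.
  auto_derive; change (fun y => p y) with p; change (fun y => q y) with q;
    change (fun y => P y) with P; change (fun y => Q y) with Q.
  - repeat split; try (eexists; eassumption); try lra. nra.
  - rewrite (is_derive_unique _ _ _ Dp), (is_derive_unique _ _ _ Dq),
      (is_derive_unique _ _ _ DP), (is_derive_unique _ _ _ DQ).
    field. lra.
Qed.

Lemma ker_Sc_jet_unique (c : R) (f g : R -> R) : c <> 0 ->
  is_lift f -> in_ker_Sc c f -> is_lift g -> in_ker_Sc c g ->
  Derive f 0 = Derive g 0 -> Derive_n f 2 0 = Derive_n g 2 0 ->
  forall x, f x - g x = f 0 - g 0.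
Proof.
  intros hc hf hkf hg hkg E1 E2.
  set (energy := fun y => ((Derive_n f 2 y / Derive f y - Derive_n g 2 y / Derive g y) ^ 2
                           + (Derive f y - Derive g y) ^ 2) / (Derive f y * Derive g y)).
  assert (Hd : forall y, is_derive energy y 0).
  { intros y.
    apply (schwarz_ode_energy_derive (Derive f) (Derive_n f 2) (Derive g) (Derive_n g 2));
      [apply lift_derive_pos; assumption .. | exact (lift_is_derive_n _ hf 1 y) | |
       exact (lift_is_derive_n _ hg 1 y) | ];
      rewrite <- ker_Sc_ode with (c := c); auto; apply lift_is_derive_n; assumption. }
  assert (Heq : forall y, Derive f y = Derive g y).
  { intros y. assert (E := is_derive_0_const energy Hd y 0). unfold energy in E.
    rewrite E1, E2, !Rminus_diag in E.
    replace ((0 ^ 2 + 0 ^ 2) / (Derive g 0 * Derive g 0)) with 0 in E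
      by (unfold Rdiv; ring).
    assert (Hf := lift_derive_pos f hf y). assert (Hg := lift_derive_pos g hg y).
    assert (Hfg := Rmult_lt_0_compat _ _ Hf Hg).
    set (u := Derive_n f 2 y / Derive f y - Derive_n g 2 y / Derive g y) in E.
    assert (N : u ^ 2 + (Derive f y - Derive g y) ^ 2 = 0).
    { apply Rmult_eq_reg_r with (/ (Derive f y * Derive g y)); [|apply Rinv_neq_0_compat; lra].
      rewrite Rmult_0_l, <- E. unfold Rdiv. ring. }
    assert (G1 := pow2_ge_0 u). assert (G2 := pow2_ge_0 (Derive f y - Derive g y)).
    assert (Z : Derive f y - Derive g y = 0) by (apply pow2_eq0; lra). lra. }
  intros x. apply (is_derive_0_const (fun t => f t - g t)). intros y.
  replace 0 with (Derive f y - Derive g y) by (rewrite Heq; ring).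
  apply (is_derive_minus f g);
    [exact (lift_is_derive_n _ hf 0 y) | exact (lift_is_derive_n _ hg 0 y)].
Qed.

Lemma ker_Sc_eq_FA (c : R) (f : R -> R) : c <> 0 -> is_lift f -> in_ker_Sc c f ->
  exists A, mdet A = 1 /\ same_diffeo (FA A) f.
Proof.
  intros hc hf hk.
  destruct (FA_initial_data (Derive f 0) (Derive_n f 2 0) (f 0) (lift_derive_pos f hf 0))
    as [A [HA [[k Hk] [E1 E2]]]].
  exists A. split; [exact HA|]. exists (- k)%Z. intros x. rewrite opp_IZR.
  assert (E := ker_Sc_jet_unique c f (FA A) hc hf hk (FA_lift A HA) (FA_Sc_zero A HA c)
                 (eq_sym E1) (eq_sym E2) x).
  lra.
Qed.

Lemma isom_same_diffeo (c : R) (g f : R -> R) :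
  is_lift g -> same_diffeo g f -> is_isom c g -> is_isom c f.
Proof.
  intros hg [k Hk] hi t1 t2 Ho.
  assert (Hd : forall x, Derive f x = Derive g x).
  { intros x. rewrite (Derive_ext f (fun y => g y + 2 * PI * IZR k)) by apply Hk.
    rewrite Derive_plus; [|eexists; exact (lift_is_derive_n _ hg 0 x) | apply ex_derive_const].
    rewrite Derive_const. ring. }
  assert (H := hi t1 t2 Ho). rewrite !Hd, !Hk. unfold gc in *. rewrite !chord2_sin_half in *.
  replace (g t1 + 2 * PI * IZR k - (g t2 + 2 * PI * IZR k)) with (g t1 - g t2) by ring.
  exact H.
Qed.

Lemma isom_iff_in_ker_Sc (c : R) (f : R -> R) : c <> 0 -> is_lift f ->
  (is_isom c f <-> in_ker_Sc c f).
Proof.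
  intros hc hf. split; [exact (isom_Sc_zero c f hc hf)|].
  intros hk. destruct (ker_Sc_eq_FA c f hc hf hk) as [A [HA HAf]].
  exact (isom_same_diffeo c (FA A) f (FA_lift A HA) HAf (FA_isom A HA c)).
Qed.

Theorem mainTheorem8 (c : R) (hc : c <> 0) :
  (* Isom_+(H, g_c) = ker(S_c) *)
  (forall f : R -> R, is_lift f -> (is_isom c f <-> in_ker_Sc c f)) /\
  (* Isom_+(H, g_c) ≅ PSL(2,R): a group homomorphism from SL(2,R) onto
     Isom_+(H, g_c) (inside Diff_+(T)) whose kernel is {I, -I} *)
  (exists F : mat2 -> (R -> R),
     (forall A, mdet A = 1 -> is_lift (F A) /\ is_isom c (F A)) /\
     (forall f, is_lift f -> is_isom c f ->
        exists A, mdet A = 1 /\ same_diffeo (F A) f) /\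
     (forall A B, mdet A = 1 -> mdet B = 1 ->
        same_diffeo (F (mmul A B)) (fun x => F A (F B x))) /\
     (forall A, mdet A = 1 ->
        (same_diffeo (F A) (fun x => x) <-> A = mI \/ A = mnegI))).
Proof.
  split; [intros f; exact (isom_iff_in_ker_Sc c f hc)|].
  exists FA. split; [|split; [|split]].
  - intros A HA. split; [apply FA_lift | apply FA_isom]; exact HA.
  - intros f hf hi. apply (ker_Sc_eq_FA c f hc hf), isom_iff_in_ker_Sc; assumption.
  - exact FA_mmul.
  - exact FA_trivial_iff.
Qed.
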